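(* Let $W=C_3\wr\mathbb{Z}$ and $B(W)=\bigoplus_{\mathbb{Z}}C_3\trianglelefteq W$. If $H\le W$ is almost-normal (i.e. its normaliser $N_W(H)$ has finite index in $W$) and $H\not\subseteq B(W)$, then $|W:H|<\infty$.
   Context: $W=\bigoplus_{\mathbb{Z}}C_3\rtimes\mathbb{Z}$, with $\mathbb{Z}$ acting on $B(W)=\bigoplus_{\mathbb{Z}}C_3$ by shifting coordinates. *)

(* The lamplighter-type group W = C_3 wr Z = (+)_Z C_3 x| Z,
   built concretely: elements are pairs (f, n) with f : int -> 'Z_3 finitely
   supported (the base group B(W)) and n : int; Z acts on B(W) by shifting. *)
From HB Require Import structures.
From mathcomp Require Import all_boot all_order all_algebra zify.
Set Implicit Arguments. Unset Strict Implicit. Unset Printing Implicit Defensive.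
Import GRing.Theory Num.Theory.
Local Open Scope ring_scope.

Definition finsupp (f : int -> 'Z_3) : Prop :=
  exists N : nat, forall k : int, (N < absz k)%N -> f k = 0.

Record lamps := Lamps { lval :> int -> 'Z_3; lvalP : finsupp lval }.

Lemma finsupp0 : finsupp (fun _ => 0).
Proof. by exists 0%N. Qed.

Lemma finsuppD (f g : lamps) : finsupp (fun k => f k + g k).
Proof.
case: f => f [N Hf]; case: g => g [M Hg]; exists (maxn N M) => k Hk /=.
rewrite Hf ?Hg ?addr0 //; lia.
Qed.

Lemma finsuppN (f : lamps) : finsupp (fun k => - f k).
Proof. case: f => f [N Hf]; exists N => k Hk /=; by rewrite Hf ?oppr0. Qed.

Lemma finsuppS (m : int) (f : lamps) : finsupp (fun k => f (k - m)).
Proof.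
case: f => f [N Hf]; exists (N + absz m)%N => k Hk /=.
apply: Hf; lia.
Qed.

Definition lzero : lamps := Lamps finsupp0.
Definition ladd (f g : lamps) : lamps := Lamps (finsuppD f g).
Definition lopp (f : lamps) : lamps := Lamps (finsuppN f).
(* shift by m : (lshift m f) k = f (k - m) *)
Definition lshift (m : int) (f : lamps) : lamps := Lamps (finsuppS m f).

Definition W := (lamps * int)%type.

Definition wmul (x y : W) : W := (ladd x.1 (lshift x.2 y.1), x.2 + y.2).
Definition wone : W := (lzero, 0).
Definition winv (x : W) : W := (lshift (- x.2) (lopp x.1), - x.2).

Definition baseW (x : W) : Prop := x.2 = 0.

Definition is_subgroup (H : W -> Prop) : Prop :=
  [/\ H wone, (forall x y, H x -> H y -> H (wmul x y)) & (forall x, H x -> H (winv x))].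

Definition normaliser (H : W -> Prop) : W -> Prop :=
  fun g => forall h, H h <-> H (wmul (wmul g h) (winv g)).

Definition finite_index (K : W -> Prop) : Prop :=
  exists s : list W, forall w : W, exists g, List.In g s /\ K (wmul (winv g) w).

Definition almost_normal (H : W -> Prop) : Prop := finite_index (normaliser H).

From Pilot Require Import Defs.
From mathcomp Require Import all_boot all_order all_algebra zify ring.
From Stdlib Require Import FunctionalExtensionality ProofIrrelevance Classical.
Set Implicit Arguments. Unset Strict Implicit. Unset Printing Implicit Defensive.
Import GRing.Theory Num.Theory.
Local Open Scope ring_scope.

(* Choose h in H with positive translation n (inverting if necessary). For b in
   the base group normalising H, the commutator [b, h] lies in H, and its lamp
   configuration is b - shift_n b. The normaliser meets the base group B(W) in a
   subgroup of finite index, and modulo the image of b |-> b - shift_n b every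
   configuration is congruent to one supported in [0, n), of which there are
   3^n; hence H meets B(W) in a subgroup of finite index. Right multiplication
   by powers of h then reduces the translation part of any element to [0, n). *)

Lemma lamps_ext (f g : lamps) : (forall k, f k = g k) -> f = g.
Proof.
case: f => f fP; case: g => g gP /= /functional_extensionality fg; subst g.
by rewrite (proof_irrelevance _ fP gP).
Qed.

Lemma wext (x y : W) : (forall k, x.1 k = y.1 k) -> x.2 = y.2 -> x = y.
Proof. by case: x => a m; case: y => b n /= /lamps_ext -> ->. Qed.

Lemma wmulA x y z : wmul x (wmul y z) = wmul (wmul x y) z.
Proof.
apply: wext => [k|] /=; last by rewrite addrA.
by rewrite addrA; congr (_ + z.1 _); ring.
Qed.

Lemma wmul1 x : wmul x wone = x.
Proof. by apply: wext => [k|] /=; rewrite addr0. Qed.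

Lemma wmul1x x : wmul wone x = x.
Proof. by apply: wext => [k|] /=; rewrite ?add0r ?subr0. Qed.

Lemma wmulV x : wmul x (winv x) = wone.
Proof.
apply: wext => [k|] /=; last by rewrite subrr.
by rewrite opprK subrK subrr.
Qed.

Lemma winvK x : winv (winv x) = x.
Proof. by apply: wext => [k|] /=; rewrite !opprK ?subrK. Qed.

Lemma wmulVx x : wmul (winv x) x = wone.
Proof. by rewrite -{2}(winvK x) wmulV. Qed.

Lemma winvM x y : winv (wmul x y) = wmul (winv y) (winv x).
Proof.
apply: wext => [k|] /=; last by rewrite opprD addrC.
by rewrite opprD addrC; congr (- y.1 _ - x.1 _); ring.
Qed.

Lemma winv1 : winv wone = wone.
Proof. by rewrite -[LHS]wmul1x wmulV. Qed.

Lemma wmulKV a b c : wmul (winv (wmul a b)) (wmul a c) = wmul (winv b) c.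
Proof. by rewrite winvM -wmulA [wmul (winv a) _]wmulA wmulVx wmul1x. Qed.

Definition elt (c : lamps) : W := (c, 0).
Definition tr (m : int) : W := (lzero, m).

Lemma tr_elt_decomp (w : W) : w = wmul (tr w.2) (elt (Defs.lshift (- w.2) w.1)).
Proof.
apply: wext => [k|] /=; last by rewrite addr0.
by rewrite add0r opprK subrK.
Qed.

Lemma elt_divE u c : wmul (winv (elt u)) (elt c) = elt (ladd c (lopp u)).
Proof.
apply: wext => [k|] /=; last by rewrite oppr0 addr0.
by rewrite oppr0 !subr0 addrC.
Qed.

Lemma normaliser_subgroup H : is_subgroup (normaliser H).
Proof.
split=> [h|a b Na Nb h|a Na h].
- by rewrite wmul1x winv1 wmul1.
- have -> : wmul (wmul (wmul a b) h) (winv (wmul a b)) =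
            wmul (wmul a (wmul (wmul b h) (winv b))) (winv a) by rewrite winvM !wmulA.
  by rewrite -Na.
- rewrite winvK (Na (wmul (wmul (winv a) h) a)).
  by rewrite !wmulA wmulV wmul1x -wmulA wmulV wmul1.
Qed.

Lemma finite_index_image (T : Type) (f : T -> W) (K : W -> Prop) :
  is_subgroup K -> finite_index K ->
  exists L : list T, forall t, exists u, List.In u L /\ K (wmul (winv (f u)) (f t)).
Proof.
case=> _ KM KV [s Ks].
suff [L HL] : exists L : list T, forall t,
    (exists g, List.In g s /\ K (wmul (winv g) (f t))) ->
    exists u, List.In u L /\ K (wmul (winv (f u)) (f t)).
  by exists L => t; apply: HL.
elim: s {Ks} => [|g s [L HL]]; first by exists nil => t [g []].
have [[t0 Kt0]|no_t0] := classic (exists t0, K (wmul (winv g) (f t0))).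
  exists (t0 :: L) => t [g' [[<-|sg'] Kt]]; last first.
    by have [u [Lu Ku]] := HL t (ex_intro _ g' (conj sg' Kt)); exists u; split; first right.
  exists t0; split; first by left.
  by rewrite -(wmulKV (winv g)) winvM; apply: KM Kt; rewrite -winvM; apply: KV.
exists L => t [g' [[<-|sg'] Kt]]; first by case: no_t0; exists t.
exact: HL t (ex_intro _ g' (conj sg' Kt)).
Qed.

Definition lcomm (n : int) (b : lamps) : lamps := ladd b (lopp (Defs.lshift n b)).

Lemma elt_commutator (b : lamps) (h : W) :
  wmul (wmul (wmul (elt b) h) (winv (elt b))) (winv h) = elt (lcomm h.2 b).
Proof.
apply: wext => [k|] /=; last by rewrite !addr0 add0r subrr.
by rewrite !(oppr0, subr0, add0r) opprK subrK addrAC addrK.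
Qed.

Lemma lcomm_mem H h b :
  is_subgroup H -> H h -> normaliser H (elt b) -> H (elt (lcomm h.2 b)).
Proof.
case=> _ HM HV Hh Nb; rewrite -elt_commutator.
by apply: HM; [apply/(Nb h) | apply: HV].
Qed.

Definition lamps_within (n : int) (rho : lamps) : Prop :=
  forall k, (k < 0) || (n <= k) -> rho k = 0.

Lemma telescope_shift (V : zmodType) (u : int -> V) (n k : int) (M : nat) :
  \sum_(t < M) u (k - t%:Z * n) - \sum_(t < M) u (k - n - t%:Z * n) =
  u k - u (k - M%:Z * n).
Proof.
elim: M => [|M IH]; first by rewrite !big_ord0 subrr mul0r subr0 subrr.
rewrite !big_ord_recr /= opprD addrACA IH addrA subrK.
by congr (_ - u _); rewrite intS mulrDl mul1r opprD addrA.
Qed.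

Section Preimage.
Variables (n : int) (c : lamps) (N : nat).
Hypothesis n_gt0 : 0 < n.
Hypothesis c_supp : forall k : int, (N < absz k)%N -> c k = 0.

(* lcomm_pre is a preimage of c under lcomm n outside [0, n): it sums c along
   the progression k, k - n, k - 2n, ..., starting left of the support of c for
   k < 0 and right of it for k >= 0, so the sums telescope to c k. *)
Let S (k : int) : 'Z_3 := \sum_(t < N.+1) c (k - t%:Z * n).

Definition lcomm_pre (k : int) : 'Z_3 :=
  if 0 <= k then - S (k + N.+1%:Z * n) else S k.

Lemma lcomm_pre_supp : finsupp lcomm_pre.
Proof.
exists N => k Hk; rewrite /lcomm_pre /S.
case: ifP => k_ge0; [rewrite big1 ?oppr0 | rewrite big1] => // t _; apply: c_supp.
  by have := ltn_ord t; nia.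
nia.
Qed.

Lemma lcomm_preP k : (k < 0) || (n <= k) -> lcomm_pre k - lcomm_pre (k - n) = c k.
Proof.
have c_far m : (N.+1%:Z * n <= `|m|) -> c m = 0.
  move=> Hm; apply: c_supp; nia.
rewrite /lcomm_pre /S; case/orP => Hk.
  rewrite !ifF; try lia.
  by rewrite telescope_shift (c_far (k - _)) ?subr0 //; nia.
rewrite !ifT; try lia.
rewrite opprK addrC [k - n + _]addrAC -opprB telescope_shift.
rewrite (c_far (k + _)); last by nia.
by rewrite addrK sub0r opprK.
Qed.
End Preimage.

Lemma lamps_decomp (n : int) (c : lamps) : 0 < n ->
  exists a rho : lamps, lamps_within n rho /\ forall k, c k = lcomm n a k + rho k.
Proof.
move=> n_gt0; have [N c_supp] := lvalP c.
pose a := Lamps (lcomm_pre_supp n_gt0 c_supp).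
exists a, (ladd c (lopp (lcomm n a))); split=> [k /(lcomm_preP n_gt0 c_supp) Hk|k] /=.
  by rewrite Hk subrr.
by rewrite subrKC.
Qed.

Lemma mem_In (T : eqType) (x : T) (s : seq T) : x \in s -> List.In x s.
Proof. by elim: s => // y s IH; rewrite in_cons => /predU1P [->|/IH]; [left | right]. Qed.

Definition lamps_of_ffun (m : nat) (F : {ffun 'I_m -> 'Z_3}) (k : int) : 'Z_3 :=
  if k is Posz i then oapp F 0 (insub i) else 0.

Lemma lamps_of_ffun_supp m F : finsupp (@lamps_of_ffun m F).
Proof. by exists m => -[i /= lt_m_i|//]; rewrite insubN // -leqNgt ltnW. Qed.

Lemma lamps_within_finite (n : int) :
  exists R : list lamps, forall rho, lamps_within n rho -> List.In rho R.
Proof.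
exists (List.map (fun F => Lamps (@lamps_of_ffun_supp `|n| F)) (enum {ffun 'I_`|n| -> 'Z_3})).
move=> rho rho_in.
have -> : rho = Lamps (@lamps_of_ffun_supp `|n| [ffun i => rho (nat_of_ord i)%:Z]).
  apply: lamps_ext => -[i|i] /=; last by apply: rho_in.
  rewrite /lamps_of_ffun; case: insubP => [j _ <-|out] /=; first by rewrite ffunE.
  by apply: rho_in; apply/orP; right; lia.
by apply: List.in_map; apply: mem_In; rewrite mem_enum.
Qed.

Definition finite_base_index (H : W -> Prop) : Prop :=
  exists L : list lamps, forall c, exists g, List.In g L /\ H (wmul (winv (elt g)) (elt c)).

Lemma almost_normal_finite_base_index H h :
  is_subgroup H -> almost_normal H -> H h -> 0 < h.2 -> finite_base_index H.
Proof.
move=> Hsub Han Hh h_pos.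
have [LK HLK] := finite_index_image elt (normaliser_subgroup H) Han.
have [R HR] := lamps_within_finite h.2.
exists (List.map (fun p => ladd p.1 (lcomm h.2 p.2)) (List.list_prod R LK)) => c.
have [a [rho [rho_in Ec]]] := lamps_decomp c h_pos.
have [u [LKu Nu]] := HLK a; rewrite elt_divE in Nu.
exists (ladd rho (lcomm h.2 u)); split.
  apply: (List.in_map (fun p => ladd p.1 (lcomm h.2 p.2)) _ (rho, u)).
  by apply: List.in_prod; [apply: HR|].
have := lcomm_mem Hsub Hh Nu; congr H; rewrite elt_divE; congr elt.
by apply: lamps_ext => k /=; rewrite Ec /=; ring.
Qed.

Lemma int_periodic_ind (Q : int -> Prop) (n : int) : 0 < n ->
  (forall m, Q (m + n) <-> Q m) -> (forall m, 0 <= m < n -> Q m) -> forall m, Q m.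
Proof.
move=> n_gt0 Qper Qbase m.
have Qshift r (q : nat) : Q (r + q%:Z * n) <-> Q r.
  elim: q => [|q IH]; first by rewrite mul0r addr0.
  by rewrite intS mulrDl mul1r addrCA addrC Qper IH.
have Qmod : Q (m %% n)%Z.
  by apply: Qbase; apply/andP; split; [exact: modz_ge0 (lt0r_neq0 n_gt0) | exact: ltz_pmod].
rewrite (divz_eq m n) addrC; case: (m %/ n)%Z => q.
  exact: (Qshift _ q).2 Qmod.
apply/(Qshift _ q.+1).
by rewrite -addrA -mulrDl NegzE addNr mul0r addr0.
Qed.

Lemma finite_index_of_base H h :
  is_subgroup H -> H h -> 0 < h.2 -> finite_base_index H -> finite_index H.
Proof.
case=> _ HM HV Hh h_pos [L HL].
pose reps := List.flat_map (fun m : nat => List.map (fun g => wmul (tr m%:Z) (elt g)) L)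
                           (iota 0 `|h.2|).
pose P w := exists r, List.In r reps /\ H (wmul (winv r) w).
have P_coset w x : H x -> P (wmul w x) <-> P w.
  move=> Hx; split=> -[r [reps_r Hr]]; exists r; split=> //.
    have -> : wmul (winv r) w = wmul (wmul (winv r) (wmul w x)) (winv x).
      by rewrite -!wmulA wmulV wmul1.
    exact: HM Hr (HV _ Hx).
  by rewrite wmulA; apply: HM.
exists reps => w.
suff: forall m, forall w, w.2 = m -> P w by apply.
apply: (int_periodic_ind h_pos) => [m|m /andP [m_ge0 m_lt] {}w w_m].
  split=> Pm {}w w_m.
    by apply/(P_coset _ _ Hh); apply: Pm => /=; rewrite w_m.
  by apply/(P_coset _ _ (HV _ Hh)); apply: Pm => /=; rewrite w_m addrK.
rewrite (tr_elt_decomp w) w_m.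
have [g [Lg Hg]] := HL (Defs.lshift (- m) w.1).
exists (wmul (tr m) (elt g)); rewrite wmulKV; split=> //.
apply/List.in_flat_map; exists `|m|%N; split.
  by apply: mem_In; rewrite mem_iota; lia.
have -> : `|m|%N%:Z = m by lia.
exact: (List.in_map (fun g => wmul (tr m) (elt g))).
Qed.

Lemma exists_pos_translation H :
  is_subgroup H -> ~ (forall h, H h -> baseW h) -> exists h, H h /\ 0 < h.2.
Proof.
case=> _ _ HV not_base.
have [h h_out] := not_all_ex_not _ _ not_base.
have [Hh h_nbase] := imply_to_and _ _ h_out.
case: (ltrgtP h.2 0) => [h2_lt0|h2_gt0|/h_nbase //]; last by exists h.
by exists (winv h); split; [apply: HV | rewrite /= oppr_gt0].
Qed.

Theorem proposition4p6 (H : W -> Prop) :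
  is_subgroup H -> almost_normal H -> ~ (forall h, H h -> baseW h) ->
  finite_index H.
Proof.
move=> Hsub Han not_base.
have [h [Hh h_pos]] := exists_pos_translation Hsub not_base.
apply: (finite_index_of_base Hsub Hh h_pos).
exact: almost_normal_finite_base_index Hsub Han Hh h_pos.
Qed.
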